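(* Let $n\ge4$ and let $x$ be a point in the image $\Phi(K_{n-1})$. Then there exist a unique chain $D_0\subsetneq D_1\subsetneq\dots\subsetneq D_m$ of sets of pairwise noncrossing diagonals of $P_n$ and unique coefficients $a_0,\dots,a_m$ with all $a_i>0$ and $\sum_i a_i=1$ such that $x=\sum_{i=0}^m a_i\Phi(D_i)$.
   Context: $P_n$ is a regular $n$-gon whose edges are labeled cyclically by a fixed circular ordering; two diagonals cross if they meet in the interior; $\mathcal D$ is the set of diagonals. The associahedron $K_{n-1}$ is the $(n-3)$-dimensional convex polytope whose faces correspond bijectively to sets $D$ of pairwise noncrossing diagonals (face of $D$ contains face of $D'$ iff $D\subseteq D'$; vertices = triangulations, with $n-3$ diagonals). For a triangulation $T$, $\Phi(T)\in\mathbb R^{\mathcal D}$ has $d$-coordinate $1/(n-3)$ if $d\in T$ and $0$ otherwise; for a set $D$ of pairwise noncrossing diagonals, $\Phi(D)$ is the average of $\Phi(T)$ over triangulations $T\supseteq D$, and is the image of the barycenter $v_D$ of the face of $D$. $\Phi$ is extended to $K_{n-1}$ affinely on each simplex of its barycentric subdivision: for a chain $D_0\subsetneq\dots\subsetneq D_m$, $\Phi(\sum a_i v_{D_i})=\sum a_i\Phi(D_i)$ for $a_i\ge0$, $\sum a_i=1$. *)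

From HB Require Import structures.
From mathcomp Require Import all_boot all_order all_algebra.
Set Implicit Arguments. Unset Strict Implicit. Unset Printing Implicit Defensive.
Import Order.TTheory GRing.Theory Num.Theory.
Local Open Scope ring_scope.

(* Vertices of P_n are 'I_n in cyclic order. A diagonal is a pair (i, j)
   with i < j that are not adjacent in the cyclic order. *)
Definition is_diag (n : nat) (p : 'I_n * 'I_n) : bool :=
  [&& (p.1 < p.2)%N, (p.1.+1 != p.2) & ~~ ((p.1 == 0%N :> nat) && (p.2 == n.-1 :> nat))].

Definition diag (n : nat) := {p : 'I_n * 'I_n | is_diag p}.

Definition crossing (n : nat) (d e : diag n) : bool :=
  let i := (val d).1 in let j := (val d).2 in
  let k := (val e).1 in let l := (val e).2 in
  [&& (i < k)%N, (k < j)%N & (j < l)%N] || [&& (k < i)%N, (i < l)%N & (l < j)%N].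

Definition noncrossing (n : nat) (D : {set diag n}) : bool :=
  [forall d in D, forall e in D, ~~ crossing d e].

Definition triangulation (n : nat) (T : {set diag n}) : bool :=
  noncrossing T && [forall d, (d \in T) || [exists e in T, crossing d e]].

Definition PhiT (R : realFieldType) (n : nat) (T : {set diag n}) : {ffun diag n -> R} :=
  [ffun d => if d \in T then ((n - 3)%:R)^-1 else 0].

Definition triangs_above (n : nat) (D : {set diag n}) : {set {set diag n}} :=
  [set T : {set diag n} | triangulation T & D \subset T].

Definition PhiD (R : realFieldType) (n : nat) (D : {set diag n}) : {ffun diag n -> R} :=
  [ffun d => (#|triangs_above D|%:R)^-1 * \sum_(T in triangs_above D) PhiT R T d].

Definition is_chain (n : nat) (s : seq {set diag n}) : bool :=
  all (@noncrossing n) s && sorted (fun A B : {set diag n} => A \proper B) s.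

Definition comb (R : realFieldType) (n : nat) (s : seq {set diag n}) (a : seq R)
  : {ffun diag n -> R} :=
  [ffun d => \sum_(i < size s) a`_i * PhiD R (nth set0 s i) d].

(* Phi(K_{n-1}): union over chains of the images of the simplices of the
   barycentric subdivision, i.e. convex combinations with a_i >= 0. *)
Definition in_image (R : realFieldType) (n : nat) (x : {ffun diag n -> R}) : Prop :=
  exists (s : seq {set diag n}) (a : seq R),
    [/\ is_chain s, size a = size s, all (fun t => 0 <= t) a,
        \sum_(t <- a) t = 1 & x = comb s a].

From HB Require Import structures.
From mathcomp Require Import all_boot all_order all_algebra.
From mathcomp Require Import zify ring.
Import Order.TTheory GRing.Theory Num.Theory.
Set Implicit Arguments. Unset Strict Implicit. Unset Printing Implicit Defensive.

(* The d-coordinate of Phi(D) is an average of values 0 and 1/(n-3), and it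
   equals 1/(n-3) exactly when d belongs to D: every noncrossing D extends to a
   triangulation, and when d is not in D some triangulation containing D avoids
   d, because some diagonal crossing d is compatible with D (the flip of d).
   Hence for a positive combination x of a chain D_0 < ... < D_m with total
   weight S, the deficit S/(n-3) - x vanishes exactly on D_0, so x determines
   D_0; at a diagonal of D_1 \ D_0 the deficit is a_0 times a positive number,
   which pins down a_0, and induction along the chain gives uniqueness.
   Existence just discards the zero coefficients of any representation. *)

Definition interleaved (a b c d : nat) : Prop :=
  (a < c /\ c < b /\ b < d)%N \/ (c < a /\ a < d /\ d < b)%N.

Definition fwd_dist (n j v : nat) : nat := if (j < v)%N then v - j else v + n - j.

(* A chord pq crossing kl but neither ik nor il must end at i, with its other
   end strictly between k and l on the side of j. *)
Lemma interleaved_flip (n i j k l p q : nat) :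
  (i < k < j)%N -> (j < l \/ l < i)%N -> (j < n)%N -> (l < n)%N -> (p < q)%N -> (q < n)%N ->
  ~ interleaved i k p q -> ~ interleaved (minn i l) (maxn i l) p q ->
  interleaved (minn k l) (maxn k l) p q ->
  p = i /\ (k < q)%N /\ (q < j)%N \/ p = i /\ q = j \/
  p = i /\ (j < q)%N /\ (fwd_dist n j q < fwd_dist n j l)%N \/
  q = i /\ (p < i)%N /\ (fwd_dist n j p < fwd_dist n j l)%N.
Proof.
rewrite /interleaved /fwd_dist => /andP[? ?] [hl|hl] ? ? ? ?.
- have -> : minn i l = i by lia.
  have -> : maxn i l = l by lia.
  have -> : minn k l = k by lia.
  have -> : maxn k l = l by lia.
  by case: ifP => ?; case: ifP => ?; case: ifP => ?; lia.
- have -> : minn i l = l by lia.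
  have -> : maxn i l = i by lia.
  have -> : minn k l = l by lia.
  have -> : maxn k l = k by lia.
  by case: ifP => ?; case: ifP => ?; case: ifP => ?; lia.
Qed.

Section Diagonals.
Variable n : nat.
Implicit Types (d e : diag n) (D T : {set diag n}) (s : seq {set diag n}).

Lemma crossingE d e :
  crossing d e <-> interleaved (val d).1 (val d).2 (val e).1 (val e).2.
Proof.
rewrite /crossing /interleaved; split.
  by case/orP => /and3P[h1 h2 h3]; [left|right].
by case=> [[h1 [h2 h3]]|[h1 [h2 h3]]]; apply/orP; [left|right]; apply/and3P.
Qed.

Lemma crossingC d e : crossing d e = crossing e d.
Proof. by rewrite /crossing orbC. Qed.

Lemma crossingxx d : ~~ crossing d d.
Proof. by apply/negP => /crossingE; rewrite /interleaved; lia. Qed.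

Lemma noncrossingP D :
  reflect {in D &, forall d e, ~~ crossing d e} (noncrossing D).
Proof.
apply: (iffP forall_inP) => [nc d e dD eD | nc d dD].
  by move/forall_inP: (nc d dD); apply.
by apply/forall_inP => e eD; apply: nc.
Qed.

Lemma noncrossingU1 D d : noncrossing D ->
  {in D, forall e, ~~ crossing d e} -> noncrossing (d |: D).
Proof.
move=> /noncrossingP nc cd; apply/noncrossingP => x y.
rewrite !in_setU1 => /orP[/eqP->|xD] /orP[/eqP->|yD].
- exact: crossingxx.
- exact: cd.
- by rewrite crossingC cd.
- exact: nc.
Qed.

Lemma crossing_notin T d e :
  noncrossing T -> e \in T -> crossing d e -> d \notin T.
Proof.
by move=> /noncrossingP nc eT cr; apply/negP => dT; move: (nc d e dT eT); rewrite cr.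
Qed.

Lemma maxset_triangulation T : maxset (@noncrossing n) T -> triangulation T.
Proof.
case/maxsetP=> ncT maxT; rewrite /triangulation ncT; apply/forallP => d.
case dT: (d \in T) => //=; apply: contraFT dT => /existsPn ncd.
have ncdT : noncrossing (d |: T).
  by apply: noncrossingU1 => // e eT; move: (ncd e); rewrite eT.
by rewrite -(maxT _ ncdT (subsetUr _ _)) setU11.
Qed.

Lemma triangulation_exists D : noncrossing D ->
  exists2 T, triangulation T & D \subset T.
Proof.
by case/maxset_exists=> T /maxset_triangulation hT sDT; exists T.
Qed.

Definition has_diag D (a b : nat) : bool :=
  [exists e in D, ((val e).1 == a :> nat) && ((val e).2 == b :> nat)].

Lemma has_diag_mem D e : e \in D -> has_diag D (val e).1 (val e).2.
Proof. by move=> eD; apply/exists_inP; exists e; rewrite ?eqxx. Qed.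

Lemma has_diag_compatible D a b e : noncrossing D -> has_diag D a b -> e \in D ->
  ~ interleaved a b (val e).1 (val e).2.
Proof.
move=> /noncrossingP nc /exists_inP[e' e'D /andP[/eqP <- /eqP <-]] eD.
by move/crossingE; apply/negP: (nc e' e e'D eD).
Qed.

Lemma inner_neighbor D (i j : nat) : noncrossing D -> (i.+1 < j)%N -> (j < n)%N ->
  exists k, [/\ (i < k < j)%N,
    forall v, (i < v < j)%N -> has_diag D i v -> (v <= k)%N &
    {in D, forall e, ~ interleaved i k (val e).1 (val e).2}].
Proof.
move=> ncD lt_ij lt_jn; have lt_in : (i.+1 < n)%N by lia.
(* The boundary edge {i, i+1} is the fallback neighbour. *)
pose P (v : 'I_n) := (v == i.+1 :> nat) || [&& (i < v)%N, (v < j)%N & has_diag D i v].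
have [|k Pk k_max] := @arg_maxnP _ (Ordinal lt_in) P val; first by rewrite /P eqxx.
exists k; split.
- by case/orP: Pk => [/eqP->|/and3P[? ? _]]; apply/andP; split; lia.
- move=> v /andP[iv vj] hv; have vn : (v < n)%N by lia.
  by apply: (k_max (Ordinal vn)); rewrite /P /= iv vj hv orbT.
- move=> e eD; case/orP: Pk => [/eqP->|/and3P[_ _ hk]].
    by rewrite /interleaved; lia.
  exact: has_diag_compatible hk eD.
Qed.

Lemma outer_neighbor D (i j : nat) : noncrossing D -> (i < j)%N -> (j < n)%N ->
  ~ (i = 0 /\ j = n.-1) ->
  exists l, [/\ (l < n)%N, (j < l)%N \/ (l < i)%N,
    forall v, (v < n)%N ->
      ((j < v)%N && has_diag D i v) || ((v < i)%N && has_diag D v i) ->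
      (fwd_dist n j l <= fwd_dist n j v)%N &
    {in D, forall e, ~ interleaved (minn i l) (maxn i l) (val e).1 (val e).2}].
Proof.
move=> ncD lt_ij lt_jn not_ends.
pose pred_i := if i == 0 then n.-1 else i.-1.
have lt_pn : (pred_i < n)%N by rewrite /pred_i; case: ifP; lia.
pose P (v : 'I_n) := [|| v == pred_i :> nat,
  (j < v)%N && has_diag D i v | (v < i)%N && has_diag D v i].
have [|l Pl l_min] := @arg_minnP _ (Ordinal lt_pn) P (fwd_dist n j \o val).
  by rewrite /P eqxx.
exists l; split => //.
- by case/or3P: Pl => [/eqP->|/andP[? _]|/andP[? _]];
    [rewrite /pred_i; case: eqP; lia|left|right].
- by move=> v vn hv; apply: (l_min (Ordinal vn)); rewrite /P /= hv orbT.
- move=> e eD; case/or3P: Pl => [/eqP->|/andP[jl hl]|/andP[li hl]].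
  + move: (ltn_ord (val e).2); move: (val e).1 (val e).2 => p q.
    by rewrite /pred_i /interleaved; case: eqP; lia.
  + have -> : minn i l = i by lia.
    have -> : maxn i l = l by lia.
    exact: has_diag_compatible hl eD.
  + have -> : minn i l = l by lia.
    have -> : maxn i l = i by lia.
    exact: has_diag_compatible hl eD.
Qed.

(* k and l are the neighbours of i (through D or the boundary) that come
   angularly next to d = ij on either side; kl is the flip of d. *)
Section Flip.
Variables (D : {set diag n}) (i j k l : nat).
Hypotheses (lt_ij : (i < j)%N) (lt_jn : (j < n)%N) (lt_ln : (l < n)%N).
Hypothesis D_ij : ~~ has_diag D i j.
Hypotheses (ikj : (i < k < j)%N) (jl_or_li : (j < l)%N \/ (l < i)%N).
Hypothesis k_max : forall v, (i < v < j)%N -> has_diag D i v -> (v <= k)%N.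
Hypothesis l_min : forall v, (v < n)%N ->
  ((j < v)%N && has_diag D i v) || ((v < i)%N && has_diag D v i) ->
  (fwd_dist n j l <= fwd_dist n j v)%N.
Hypothesis ik_compatible : {in D, forall e, ~ interleaved i k (val e).1 (val e).2}.
Hypothesis il_compatible :
  {in D, forall e, ~ interleaved (minn i l) (maxn i l) (val e).1 (val e).2}.

Lemma flip_compatible :
  {in D, forall e, ~ interleaved (minn k l) (maxn k l) (val e).1 (val e).2}.
Proof.
move=> e eD; have D_pq := has_diag_mem eD; have /and3P[lt_pq _ _] := valP e.
have lt_qn := ltn_ord (val e).2.
move: (ik_compatible eD) (il_compatible eD) D_pq.
move: (val e).1 (val e).2 lt_pq lt_qn => p q lt_pq lt_qn ik_pq il_pq D_pq cr.
have [[p_i [kq qj]]|[[p_i q_j]|[[p_i [jq dq]]|[q_i [pi dp]]]]] :=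
  interleaved_flip ikj jl_or_li lt_jn lt_ln lt_pq lt_qn ik_pq il_pq cr.
- have iqj : (i < q < j)%N by apply/andP; split; lia.
  by move: (k_max iqj); rewrite -p_i D_pq; lia.
- by move: D_ij; rewrite -p_i -q_j D_pq.
- by move: (l_min lt_qn); rewrite jq -p_i D_pq; lia.
- by move: (l_min (ltn_trans lt_pq lt_qn)); rewrite pi -q_i D_pq orbT; lia.
Qed.
End Flip.

Lemma exists_flip D d : noncrossing D -> d \notin D ->
  exists2 d', crossing d d' & {in D, forall e, ~~ crossing d' e}.
Proof.
case: d => [[i j] dij] ncD dD; have /and3P[/= lt_ij i1j not_ends] := dij.
have D_ij : ~~ has_diag D i j.
  apply: contra dD => /exists_inP[e eD /andP[/eqP ei /eqP ej]].
  suff -> : exist _ (i, j) dij = e by [].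
  by apply: val_inj; rewrite /= [RHS]surjective_pairing (ord_inj ei) (ord_inj ej).
have lt_jn := ltn_ord j; have lt_i1j : (i.+1 < j)%N by lia.
have not_ends' : ~ ((i : nat) = 0 /\ (j : nat) = n.-1) by lia.
have [k [ikj k_max ik_compatible]] := inner_neighbor ncD lt_i1j lt_jn.
have [l [lt_ln jl_or_li l_min il_compatible]] :=
  outer_neighbor ncD lt_ij lt_jn not_ends'.
have lt_mn : (minn k l < n)%N by lia.
have lt_mxn : (maxn k l < n)%N by lia.
have kl_diag : is_diag (Ordinal lt_mn, Ordinal lt_mxn).
  by rewrite /is_diag /=; apply/and3P; split; lia.
exists (exist _ (Ordinal lt_mn, Ordinal lt_mxn) kl_diag : diag n).
  by apply/crossingE; rewrite /interleaved /=; lia.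
move=> e eD; apply/negP => /crossingE.
exact: flip_compatible lt_ij lt_jn lt_ln D_ij ikj jl_or_li k_max l_min
  ik_compatible il_compatible e eD.
Qed.

Lemma triangulation_avoiding D d : noncrossing D -> d \notin D ->
  exists2 T, triangulation T & (D \subset T) && (d \notin T).
Proof.
move=> ncD dD; have [d' dd' d'D] := exists_flip ncD dD.
have [T hT sT] := triangulation_exists (noncrossingU1 ncD d'D).
exists T => //; rewrite (subset_trans (subsetUr _ _) sT) /=.
by case/andP: hT => ncT _; apply: crossing_notin ncT (subsetP sT _ (setU11 _ _)) dd'.
Qed.

Lemma is_chain_cons D s : is_chain (D :: s) =
  [&& noncrossing D, all (fun E : {set diag n} => D \proper E) s & is_chain s].
Proof.
rewrite /is_chain /= path_sortedE; last by move=> ? ? ?; apply: proper_trans.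
by rewrite -!andbA; congr (_ && _); rewrite andbCA.
Qed.

Lemma is_chain_subseq s1 s2 : subseq s1 s2 -> is_chain s2 -> is_chain s1.
Proof.
move=> s12 /andP[nc_s2 sorted_s2]; apply/andP; split.
  by apply/allP => E /(mem_subseq s12); apply/allP.
by apply: subseq_sorted s12 sorted_s2 => ? ? ?; apply: proper_trans.
Qed.

Lemma is_chain_head_sub D s E : is_chain (D :: s) -> E \in D :: s -> D \subset E.
Proof.
rewrite is_chain_cons inE => /and3P[_ /allP D_s _] /orP[/eqP-> //|Es].
exact/proper_sub/D_s.
Qed.

End Diagonals.

Local Open Scope ring_scope.

Lemma mean_const (F : numFieldType) (N : nat) (x : F) :
  (0 < N)%N -> N%:R^-1 * (x *+ N) = x.
Proof.
by move=> N_gt0; rewrite -[x *+ N]mulr_natr mulrCA mulVf ?mulr1 // pnatr_eq0 -lt0n.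
Qed.

Section Barycenters.
Variables (R : realFieldType) (n : nat).
Hypothesis n_ge4 : (4 <= n)%N.
Implicit Types (d : diag n) (D E T : {set diag n}) (s : seq {set diag n}) (a : seq R).

Local Notation cmax := ((n - 3)%:R^-1 : R).

Lemma cmax_gt0 : 0 < cmax.
Proof. by rewrite invr_gt0 ltr0n; lia. Qed.

Lemma PhiT_le T d : PhiT R T d <= cmax.
Proof. by rewrite ffunE; case: ifP => // _; exact: ltW cmax_gt0. Qed.

Lemma PhiD_le D d : PhiD R D d <= cmax.
Proof.
rewrite ffunE; case: (posnP #|triangs_above D|) => [->|N_gt0].
  by rewrite invr0 mul0r; exact: ltW cmax_gt0.
rewrite -[leRHS](mean_const _ N_gt0) ler_wpM2l ?invr_ge0 ?ler0n // -sumr_const.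
by apply: ler_sum => T _; exact: PhiT_le.
Qed.

Lemma PhiD_in D d : noncrossing D -> d \in D -> PhiD R D d = cmax.
Proof.
move=> ncD dD; have [T0 hT0 sT0] := triangulation_exists ncD.
have N_gt0 : (0 < #|triangs_above D|)%N by apply/card_gt0P; exists T0; rewrite inE hT0.
rewrite ffunE -[RHS](mean_const _ N_gt0); congr (_ * _).
rewrite -sumr_const; apply: eq_bigr => T; rewrite inE => /andP[_ sT].
by rewrite ffunE (subsetP sT _ dD).
Qed.

Lemma PhiD_lt D d : noncrossing D -> d \notin D -> PhiD R D d < cmax.
Proof.
move=> ncD dD; have [T0 hT0 /andP[sT0 dT0]] := triangulation_avoiding ncD dD.
have T0D : T0 \in triangs_above D by rewrite inE hT0.
have N_gt0 : (0 < #|triangs_above D|)%N by apply/card_gt0P; exists T0.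
rewrite ffunE -[ltRHS](mean_const _ N_gt0) ltr_pM2l ?invr_gt0 ?ltr0n //.
rewrite -subr_gt0 -sumr_const -sumrB (bigD1 T0) //= ffunE (negbTE dT0) subr0.
apply: ltr_pwDl cmax_gt0 _; apply: sumr_ge0 => T _.
by rewrite subr_ge0 PhiT_le.
Qed.

Definition deficit (s : seq {set diag n}) (a : seq R) d : R :=
  cmax * \sum_(t <- a) t - comb s a d.

Lemma comb_cons D s x a d : comb (D :: s) (x :: a) d = x * PhiD R D d + comb s a d.
Proof. by rewrite [LHS]ffunE [comb s a d]ffunE big_ord_recl. Qed.

Lemma deficit_nil d : deficit [::] [::] d = 0.
Proof. by rewrite /deficit big_nil ffunE big_ord0 mulr0 subr0. Qed.

Lemma deficit_cons D s x a d :
  deficit (D :: s) (x :: a) d = x * (cmax - PhiD R D d) + deficit s a d.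
Proof. rewrite /deficit comb_cons big_cons; ring. Qed.

Lemma deficit_ge0 s a d : size a = size s -> all (fun t => 0 < t) a ->
  0 <= deficit s a d.
Proof.
elim: s a => [|D s IH] [|x a] //=; first by rewrite deficit_nil.
move=> [sz_a] /andP[x_gt0 a_gt0].
rewrite deficit_cons addr_ge0 ?IH //.
by apply: mulr_ge0; [exact: ltW | rewrite subr_ge0 PhiD_le].
Qed.

Lemma deficit_eq0 s a d : size a = size s -> all (@noncrossing n) s ->
  {in s, forall E : {set diag n}, d \in E} -> deficit s a d = 0.
Proof.
elim: s a => [|D s IH] [|x a] //=; first by rewrite deficit_nil.
move=> [sz_a] /andP[ncD nc_s] d_s.
rewrite deficit_cons PhiD_in ?d_s ?mem_head // subrr mulr0 add0r IH // => E Es.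
by apply: d_s; rewrite inE Es orbT.
Qed.

Lemma sum_cons_gt0 x a : all (fun t => 0 < t) (x :: a) -> 0 < \sum_(t <- x :: a) t.
Proof.
rewrite big_cons /= => /andP[x_gt0 a_gt0]; apply: ltr_pwDl x_gt0 _.
by rewrite big_seq sumr_ge0 // => t /(allP a_gt0)/ltW.
Qed.

Section HeadOfChain.
Variables (D : {set diag n}) (s : seq {set diag n}) (x : R) (a : seq R).
Hypotheses (chain_Ds : is_chain (D :: s)) (sz_a : size a = size s).
Hypothesis xa_gt0 : all (fun t => 0 < t) (x :: a).

Lemma deficit_head_eq0 d : d \in D -> deficit (D :: s) (x :: a) d = 0.
Proof.
move=> dD; apply: deficit_eq0; first by rewrite /= sz_a.
  by case/andP: chain_Ds.
by move=> E /(is_chain_head_sub chain_Ds)/subsetP; apply.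
Qed.

Lemma deficit_head_ge d : x * (cmax - PhiD R D d) <= deficit (D :: s) (x :: a) d.
Proof.
case/andP: xa_gt0 => _ a_gt0.
by rewrite deficit_cons lerDl deficit_ge0.
Qed.

Lemma deficit_head_gt0 d : d \notin D -> 0 < deficit (D :: s) (x :: a) d.
Proof.
move=> dD; case/andP: xa_gt0 => x_gt0 _.
have ncD : noncrossing D by move: chain_Ds; rewrite is_chain_cons => /and3P[].
apply: lt_le_trans (deficit_head_ge d).
by rewrite mulr_gt0 // subr_gt0 PhiD_lt.
Qed.

Lemma deficit_head_only d : {in s, forall E : {set diag n}, d \in E} ->
  deficit (D :: s) (x :: a) d = x * (cmax - PhiD R D d).
Proof.
move=> d_s; move: chain_Ds; rewrite is_chain_cons => /and3P[_ _ /andP[nc_s _]].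
by rewrite deficit_cons deficit_eq0 ?addr0.
Qed.

End HeadOfChain.

Lemma chain_head_sub D s x a E s' y a' :
  is_chain (D :: s) -> is_chain (E :: s') -> size a = size s -> size a' = size s' ->
  all (fun t => 0 < t) (y :: a') ->
  deficit (D :: s) (x :: a) =1 deficit (E :: s') (y :: a') -> D \subset E.
Proof.
move=> chain_Ds chain_Es' sz_a sz_a' ya'_gt0 eq_def.
apply/subsetP => d dD; apply: contraT => dE.
have := deficit_head_gt0 chain_Es' sz_a' ya'_gt0 dE.
by rewrite -eq_def (deficit_head_eq0 _ chain_Ds sz_a) ?ltxx.
Qed.

Lemma chain_head_coef_le D D1 s x a s' y a' :
  is_chain (D :: D1 :: s) -> size a = size (D1 :: s) -> size a' = size s' ->
  all (fun t => 0 < t) (x :: a) -> all (fun t => 0 < t) (y :: a') ->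
  deficit (D :: D1 :: s) (x :: a) =1 deficit (D :: s') (y :: a') -> y <= x.
Proof.
move=> chain_D1s sz_a sz_a' xa_gt0 ya'_gt0 eq_def.
(* At d in D1 \ D the first deficit is x (cmax - PhiD D d), the second at least y times it. *)
move: (chain_D1s); rewrite is_chain_cons.
case/and3P=> ncD /andP[/properP[_ [d dD1 dD]] _] chain_s.
have d_D1s : {in D1 :: s, forall E : {set diag n}, d \in E}.
  by move=> E /(is_chain_head_sub chain_s)/subsetP; apply.
have := deficit_head_ge D sz_a' ya'_gt0 d.
rewrite -eq_def (deficit_head_only _ chain_D1s) // ler_pM2r // subr_gt0.
exact: PhiD_lt.
Qed.

Lemma chain_head_coef_eq D s x a s' y a' :
  is_chain (D :: s) -> is_chain (D :: s') -> size a = size s -> size a' = size s' ->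
  all (fun t => 0 < t) (x :: a) -> all (fun t => 0 < t) (y :: a') ->
  \sum_(t <- x :: a) t = \sum_(t <- y :: a') t ->
  deficit (D :: s) (x :: a) =1 deficit (D :: s') (y :: a') -> x = y.
Proof.
move=> chain_Ds chain_Ds' sz_a sz_a' xa_gt0 ya'_gt0 eq_sum eq_def.
have eq_def' d := esym (eq_def d).
case: s a sz_a chain_Ds xa_gt0 eq_sum eq_def eq_def'
  => [|D1 s] [|x1 a] // sz_a chain_Ds xa_gt0;
  case: s' a' sz_a' chain_Ds' ya'_gt0 => [|E1 s'] [|y1 a'] // sz_a' chain_Ds' ya'_gt0.
- by rewrite !big_seq1.
- rewrite big_seq1 => eq_sum _ eq_def'.
  have := chain_head_coef_le chain_Ds' sz_a' sz_a ya'_gt0 xa_gt0 eq_def'.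
  by rewrite eq_sum big_cons gerDl leNgt sum_cons_gt0 //; case/andP: ya'_gt0.
- rewrite [RHS]big_seq1 => eq_sum eq_def _.
  have := chain_head_coef_le chain_Ds sz_a sz_a' xa_gt0 ya'_gt0 eq_def.
  by rewrite -eq_sum big_cons gerDl leNgt sum_cons_gt0 //; case/andP: xa_gt0.
- move=> _ eq_def eq_def'; apply/le_anti/andP; split.
    exact: chain_head_coef_le chain_Ds' sz_a' sz_a ya'_gt0 xa_gt0 eq_def'.
  exact: chain_head_coef_le chain_Ds sz_a sz_a' xa_gt0 ya'_gt0 eq_def.
Qed.

Lemma chain_comb_inj s a s' a' :
  is_chain s -> is_chain s' -> size a = size s -> size a' = size s' ->
  all (fun t => 0 < t) a -> all (fun t => 0 < t) a' ->
  \sum_(t <- a) t = \sum_(t <- a') t -> comb s a = comb s' a' -> s = s' /\ a = a'.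
Proof.
elim: s a s' a' => [|D s IH] a s' a' chain_s chain_s' sz_a sz_a' a_gt0 a'_gt0.
  case: a sz_a a_gt0 => // _ _.
  case: s' a' sz_a' a'_gt0 {chain_s'} => [|E s'] [|y a'] // _ ya'_gt0.
  by move=> eq_sum; have := sum_cons_gt0 ya'_gt0; rewrite -eq_sum big_nil ltxx.
case: a sz_a a_gt0 => [//|x a] [sz_a] xa_gt0.
case: s' a' sz_a' a'_gt0 chain_s' => [|E s'] [|y a'] //.
  by move=> _ _ _ eq_sum; have := sum_cons_gt0 xa_gt0; rewrite eq_sum big_nil ltxx.
move=> [sz_a'] ya'_gt0 chain_s' eq_sum eq_comb.
have eq_def : deficit (D :: s) (x :: a) =1 deficit (E :: s') (y :: a').
  by move=> d; rewrite /deficit eq_sum eq_comb.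
have eq_DE : D = E.
  apply/eqP; rewrite eqEsubset (chain_head_sub chain_s chain_s' sz_a sz_a' ya'_gt0 eq_def).
  exact: chain_head_sub chain_s' chain_s sz_a' sz_a xa_gt0 (fun d => esym (eq_def d)).
subst E.
have eq_xy := chain_head_coef_eq chain_s chain_s' sz_a sz_a' xa_gt0 ya'_gt0 eq_sum eq_def.
subst y; have [-> ->] : s = s' /\ a = a'; last by [].
move: chain_s chain_s' xa_gt0 ya'_gt0; rewrite !is_chain_cons.
move=> /and3P[_ _ chain_s] /and3P[_ _ chain_s'] /andP[_ a_gt0] /andP[_ a'_gt0].
apply: IH => //; first by move: eq_sum; rewrite !big_cons => /addrI.
by apply/ffunP => d; move/ffunP/(_ d): eq_comb; rewrite !comb_cons => /addrI.
Qed.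

Lemma drop_zero_coefs s a : size a = size s -> all (fun t => 0 <= t) a ->
  exists s1 a1, [/\ subseq s1 s, size a1 = size s1, all (fun t => 0 < t) a1,
    \sum_(t <- a1) t = \sum_(t <- a) t & comb s1 a1 = comb s a].
Proof.
elim: s a => [|D s IH] [|x a] //=; first by exists [::], [::].
move=> [sz_a] /andP[x_ge0 a_ge0].
have [s1 [a1 [sub_s1 sz_a1 a1_gt0 sum_a1 comb_a1]]] := IH a sz_a a_ge0.
have [x0|x_neq0] := eqVneq x 0.
  exists s1, a1; split => //.
  - exact: subseq_trans sub_s1 (subseq_cons _ _).
  - by rewrite big_cons x0 add0r.
  - by apply/ffunP => d; rewrite comb_cons x0 mul0r add0r comb_a1.
exists (D :: s1), (x :: a1); split => /=.
- by rewrite eqxx.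
- by rewrite sz_a1.
- by rewrite a1_gt0 andbT lt_def x_neq0.
- by rewrite !big_cons sum_a1.
- by apply/ffunP => d; rewrite !comb_cons comb_a1.
Qed.

End Barycenters.

Theorem lemma15 (R : realFieldType) (n : nat) (hn : (4 <= n)%N)
  (x : {ffun diag n -> R}) (hx : in_image x) :
  exists (s : seq {set diag n}) (a : seq R),
    [/\ is_chain s, size a = size s, all (fun t => 0 < t) a,
        \sum_(t <- a) t = 1 & x = comb s a] /\
    forall (s' : seq {set diag n}) (a' : seq R),
      [/\ is_chain s', size a' = size s', all (fun t => 0 < t) a',
          \sum_(t <- a') t = 1 & x = comb s' a'] ->
      s' = s /\ a' = a.
Proof.
case: hx => s [a [chain_s sz_a a_ge0 sum_a x_eq]].
have [s1 [a1 [sub_s1 sz_a1 a1_gt0 sum_a1 comb_a1]]] := drop_zero_coefs sz_a a_ge0.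
have chain_s1 := is_chain_subseq sub_s1 chain_s.
exists s1, a1; split; first by split; rewrite // ?sum_a1 ?comb_a1.
move=> s' a' [chain_s' sz_a' a'_gt0 sum_a' x_eq'].
apply: (chain_comb_inj hn) => //; first by rewrite sum_a' sum_a1.
by rewrite -x_eq' comb_a1.
Qed.
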